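(* Let $\varphi:\Lambda\to\Gamma$ be a regular covering map of finite simplicial graphs. For every vertex $v$ of $\Gamma$ and every connected component $B$ of $\Gamma\setminus\mathrm{st}(v)$, the partial conjugation $P^v_{\bar B}$ is liftable.
   Context: Graphs are finite simplicial graphs; subgraphs are induced. $A_\Gamma$ is the right-angled Artin group with generators $V\Gamma$ and relations $[u,w]=1$ for edges. $\mathrm{lk}(v)$ is induced by the neighbours of $v$, $\mathrm{st}(v)$ by $\mathrm{lk}(v)\cup\{v\}$. A covering map $\varphi:\Lambda\to\Gamma$ is a surjective simplicial map mapping the neighbours of each vertex $u$ bijectively onto the neighbours of $\varphi(u)$; regular means the group of graph automorphisms $\mu$ of $\Lambda$ with $\varphi\mu=\varphi$ acts transitively on each fiber. $\phi:A_\Lambda\to A_\Gamma$ is induced by $\varphi$; $f\in\mathrm{Aut}(A_\Gamma)$ is liftable if there is $F\in\mathrm{Aut}(A_\Lambda)$ with $f\circ\phi=\phi\circ F$. For a union $C$ of components of $\Gamma\setminus\mathrm{st}(v)$, $P^v_C$ sends each vertex $w$ of $C$ to $vwv^{-1}$ and fixes other vertices. For a vertex $u$ of $\Lambda$ and a connected subgraph $A$ of $\Lambda$ disjoint from $\mathrm{st}(u)$, $C(u,A)$ is the component of $\Lambda\setminus\mathrm{st}(u)$ containing $A$. For a component $B$ of $\Gamma\setminus\mathrm{st}(v)$, pick a component $\tilde B$ of $\varphi^{-1}(B)$ and set $\bar B=\varphi\big(\bigcap_{u\in\varphi^{-1}(v)}C(u,\tilde B)\big)$; this is independent of the choice of $\tilde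 B$ and is a union of components of $\Gamma\setminus\mathrm{st}(v)$ containing $B$. *)

From mathcomp Require Import all_boot.
From Stdlib Require Import Relation_Operators.
Set Implicit Arguments. Unset Strict Implicit. Unset Printing Implicit Defensive.

Definition simple_graph (T : finType) (e : rel T) : Prop := symmetric e /\ irreflexive e.

Definition star (T : finType) (e : rel T) (v : T) : {set T} := v |: [set w | e v w].

(* connected component of x in the subgraph induced by S (assumes x \in S) *)
Definition icomp (T : finType) (e : rel T) (S : {set T}) (x : T) : {set T} :=
  [set y in S | connect [rel a b | [&& e a b, a \in S & b \in S]] x y].

(* A word is a list of letters (generator, inverted?). *)
Definition word (T : Type) := seq (T * bool).
Definition letter (T : Type) (x : T) : word T := [:: (x, false)].
Definition winv (T : Type) (w : word T) : word T := rev (map (fun p => (p.1, ~~ p.2)) w).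

Inductive rstep (T : Type) (e : rel T) : word T -> word T -> Prop :=
| rstep_cancel s1 s2 x b : rstep e (s1 ++ (x, b) :: (x, ~~ b) :: s2) (s1 ++ s2)
| rstep_comm s1 s2 x y b c : e x y ->
    rstep e (s1 ++ (x, b) :: (y, c) :: s2) (s1 ++ (y, c) :: (x, b) :: s2).

Definition weq (T : Type) (e : rel T) : word T -> word T -> Prop :=
  clos_refl_sym_trans (word T) (rstep e).

Definition wsubst (T S : Type) (g : T -> word S) (w : word T) : word S :=
  flatten (map (fun p => if p.2 then winv (g p.1) else g p.1) w).

(* g : V(Gamma) -> A_Delta defines a homomorphism A_Gamma -> A_Delta *)
Definition is_hom (T S : Type) (e : rel T) (e' : rel S) (g : T -> word S) : Prop :=
  forall x y, e x y -> weq e' (g x ++ g y) (g y ++ g x).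

Definition is_aut (T : Type) (e : rel T) (g : T -> word T) : Prop :=
  is_hom e e g /\
  exists h : T -> word T, is_hom e e h /\
    (forall x, weq e (wsubst g (h x)) (letter x)) /\
    (forall x, weq e (wsubst h (g x)) (letter x)).

Definition is_covering (L G : finType) (eL : rel L) (eG : rel G) (phi : L -> G) : Prop :=
  [/\ forall y, exists x, phi x = y,
      forall u w, eL u w -> eG (phi u) (phi w),
      forall u, {in [pred w | eL u w] &, injective phi}
    & forall u y, eG (phi u) y -> exists w, eL u w /\ phi w = y].

Definition is_regular_covering (L G : finType) (eL : rel L) (eG : rel G) (phi : L -> G) : Prop :=
  is_covering eL eG phi /\
  forall u u', phi u = phi u' ->
    exists mu : L -> L, [/\ bijective mu, forall a b, eL (mu a) (mu b) = eL a b,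
                           forall a, phi (mu a) = phi a & mu u = u'].

Definition liftable (L G : finType) (eL : rel L) (eG : rel G) (phi : L -> G)
  (f : G -> word G) : Prop :=
  exists F : L -> word L, is_aut eL F /\
    forall x, weq eG (f (phi x)) (wsubst (fun z => letter (phi z)) (F x)).

Definition pconj (T : finType) (v : T) (C : {set T}) : T -> word T :=
  fun w => if w \in C then [:: (v, false); (w, false); (v, true)] else letter w.

(* \bar B, where B~ is the component of phi^{-1}(B) containing x *)
Definition barB (L G : finType) (eL : rel L) (phi : L -> G) (v : G) (x : L) : {set G} :=
  phi @: [set y | [forall u, (phi u == v) ==> (y \in icomp eL (~: star eL u) x)]].

(* Let U = phi^-1(v). The stars of the vertices of U are pairwise disjoint, so for distinct
   u, u' in U the whole star of u lies in one component of Lambda - st(u'), and the components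
   of the complements of these stars nest like the branches of a tree. For z outside all
   stars of U put core z = the intersection of the C(u, z), u in U, and call u in U a frontier
   vertex of z if no other vertex of U separates u from z. Then every y outside the stars of
   U that is connected to z is either in core z or cut off from z by exactly one frontier
   vertex. Hence the automorphism of A_Lambda that conjugates the component of z (minus
   st(u0)) by some u0 in U and then, for each frontier vertex u, conjugates by u^-1 the part
   cut off from z by st(u), maps to the partial conjugation by v of phi(core z): the vertices
   inside the stars of U map into st(v), which commutes with v. By regularity, the preimage
   of \bar B is a union of cores, and the product of these automorphisms over the distinct
   cores lifts P^v_{\bar B}. *)

From mathcomp Require Import all_boot zify.
From Stdlib Require Import Relation_Operators.
Set Implicit Arguments. Unset Strict Implicit. Unset Printing Implicit Defensive.

Section WordEquality.
Variables (T : Type) (e : rel T).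
Implicit Types (s t w : word T) (x y : T) (b c : bool).

Lemma weq_refl w : weq e w w. Proof. exact: rst_refl. Qed.
Lemma weq_sym w w' : weq e w w' -> weq e w' w. Proof. exact: rst_sym. Qed.
Lemma weq_trans w1 w2 w3 : weq e w1 w2 -> weq e w2 w3 -> weq e w1 w3.
Proof. exact: rst_trans. Qed.

Lemma weq_cancel s t x b : weq e (s ++ (x, b) :: (x, ~~ b) :: t) (s ++ t).
Proof. exact/rst_step/rstep_cancel. Qed.

Lemma weq_swap s t x y b c : e x y ->
  weq e (s ++ (x, b) :: (y, c) :: t) (s ++ (y, c) :: (x, b) :: t).
Proof. by move=> exy; apply/rst_step/rstep_comm. Qed.

Lemma weq_ctx s t w w' : weq e w w' -> weq e (s ++ w ++ t) (s ++ w' ++ t).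
Proof.
elim=> {w w'} [w w' []|w|w w' _|w1 w2 w3 _ IH1 _ IH2].
- by move=> s1 s2 x b; have := weq_cancel (s ++ s1) (s2 ++ t) x b; rewrite -!catA.
- move=> s1 s2 x y b c /(weq_swap (s ++ s1) (s2 ++ t) b c).
  by rewrite -!catA.
- exact: weq_refl.
- exact: weq_sym.
- exact: weq_trans IH1 IH2.
Qed.

Lemma weq_cat w1 w1' w2 w2' :
  weq e w1 w1' -> weq e w2 w2' -> weq e (w1 ++ w2) (w1' ++ w2').
Proof.
move=> /(weq_ctx [::] w2) /= w1w1' /(weq_ctx w1' [::]); rewrite !cats0.
exact: weq_trans w1w1'.
Qed.

Lemma winv_cat s t : winv (s ++ t) = winv t ++ winv s.
Proof. by rewrite /winv map_cat rev_cat. Qed.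

Lemma winv_cons x b w : winv ((x, b) :: w) = winv w ++ [:: (x, ~~ b)].
Proof. by rewrite /winv /= rev_cons cats1. Qed.

Lemma winvK : involutive (@winv T).
Proof.
by elim=> //= -[x b] w IHw; rewrite winv_cons winv_cat IHw /= negbK.
Qed.

Lemma weq_catwV w : weq e (w ++ winv w) [::].
Proof.
elim: w => [|[x b] w IHw]; first exact: weq_refl.
rewrite winv_cons catA cat_cons -cat1s -catA.
apply: weq_trans (weq_ctx _ _ IHw) _.
exact: (weq_cancel [::] [::] x b).
Qed.

Lemma weq_catVw w : weq e (winv w ++ w) [::].
Proof. by have := weq_catwV (winv w); rewrite winvK. Qed.

Definition wcommute w1 w2 := weq e (w1 ++ w2) (w2 ++ w1).

Lemma wcommuteVl w1 w2 : wcommute w1 w2 -> wcommute (winv w1) w2.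
Proof.
move=> c12; rewrite /wcommute.
apply: (@weq_trans _ (winv w1 ++ w2 ++ (w1 ++ winv w1))).
  by have := weq_ctx (winv w1 ++ w2) [::] (weq_sym (weq_catwV w1)); rewrite !cats0 -!catA.
apply: (@weq_trans _ (winv w1 ++ (w1 ++ w2) ++ winv w1)).
  by have := weq_ctx (winv w1) (winv w1) (weq_sym c12); rewrite -!catA.
by have := weq_ctx [::] (w2 ++ winv w1) (weq_catVw w1); rewrite -!catA.
Qed.

Lemma wcommute_sym w1 w2 : wcommute w1 w2 -> wcommute w2 w1.
Proof. exact: weq_sym. Qed.

Hypothesis esym : symmetric e.

Lemma weq_winv w w' : weq e w w' -> weq e (winv w) (winv w').
Proof.
elim=> {w w'} [w w' []|w|w w' _|w1 w2 w3 _ IH1 _ IH2].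
- move=> s t x b; rewrite !winv_cat !winv_cons -!catA /= negbK.
  exact: weq_cancel.
- move=> s t x y b c exy; rewrite !winv_cat !winv_cons -!catA /=.
  by apply: weq_swap; rewrite esym.
- exact: weq_refl.
- exact: weq_sym.
- exact: weq_trans IH1 IH2.
Qed.

End WordEquality.

Section Substitution.
Variables (T S : Type).
Implicit Types (g : T -> word S) (w : word T).

Lemma wsubst_cat g w1 w2 : wsubst g (w1 ++ w2) = wsubst g w1 ++ wsubst g w2.
Proof. by rewrite /wsubst map_cat flatten_cat. Qed.

Lemma wsubst_cons g x b w :
  wsubst g ((x, b) :: w) = (if b then winv (g x) else g x) ++ wsubst g w.
Proof. by []. Qed.

Lemma wsubst_winv g w : wsubst g (winv w) = winv (wsubst g w).
Proof.
elim: w => [|[x b] w IHw] //.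
rewrite winv_cons wsubst_cat IHw wsubst_cons winv_cat /= cats0.
by case: b; rewrite ?winvK.
Qed.

Lemma eq_wsubst_weq (e : rel S) g g' w : symmetric e ->
  (forall x, weq e (g x) (g' x)) -> weq e (wsubst g w) (wsubst g' w).
Proof.
move=> esym gg'; elim: w => [|[x b] w IHw]; first exact: weq_refl.
rewrite !wsubst_cons; apply: weq_cat => //.
by case: b; [apply: weq_winv|].
Qed.

Lemma wsubst_weq (e : rel T) (e' : rel S) g w w' :
  is_hom e e' g -> weq e w w' -> weq e' (wsubst g w) (wsubst g w').
Proof.
move=> hom_g; elim=> {w w'} [w w' []|w|w w' _|w1 w2 w3 _ IH1 _ IH2].
- move=> s t x b; rewrite !wsubst_cat !wsubst_cons.
  case: b; [have := weq_catVw e' (g x)|have := weq_catwV e' (g x)];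
  by move/(weq_ctx (wsubst g s) (wsubst g t)); rewrite -catA.
- move=> s t x y b c exy; rewrite !wsubst_cat !wsubst_cons !catA.
  rewrite -!(catA (wsubst g s)); apply: weq_ctx.
  have cxy : wcommute e' (g x) (g y) := hom_g x y exy.
  have cxy' : wcommute e' (if b then winv (g x) else g x) (g y).
    by case: b => //; apply: wcommuteVl.
  by case: c => //; apply/wcommute_sym/wcommuteVl/wcommute_sym.
- exact: weq_refl.
- exact: weq_sym.
- exact: weq_trans IH1 IH2.
Qed.

End Substitution.

Lemma wsubst_comp (A B C : Type) (g : B -> word C) (h : A -> word B) w :
  wsubst g (wsubst h w) = wsubst (fun z => wsubst g (h z)) w.
Proof.
elim: w => [|[x b] w IHw] //.
rewrite !wsubst_cons wsubst_cat IHw.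
by case: b; rewrite ?wsubst_winv.
Qed.

Lemma wsubst_letter (T : Type) (w : word T) : wsubst (@letter T) w = w.
Proof. by elim: w => [|[x b] w IHw] //; rewrite wsubst_cons IHw; case: b. Qed.

Section Automorphisms.
Variables (T : Type) (e : rel T).
Hypothesis esym : symmetric e.
Implicit Types (g h : T -> word T).

Lemma is_hom_comp g h : is_hom e e g -> is_hom e e h ->
  is_hom e e (fun y => wsubst g (h y)).
Proof.
by move=> hom_g hom_h x y exy; rewrite -!wsubst_cat; exact/(wsubst_weq hom_g)/hom_h.
Qed.

Lemma is_aut_comp g h : is_aut e g -> is_aut e h ->
  is_aut e (fun y => wsubst g (h y)).
Proof.
move=> [hom_g [g' [hom_g' [gg' g'g]]]] [hom_h [h' [hom_h' [hh' h'h]]]].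
split; first exact: is_hom_comp.
exists (fun y => wsubst h' (g' y)); split; first exact: is_hom_comp.
split=> x.
- rewrite -wsubst_comp; apply: weq_trans (gg' x); apply: (wsubst_weq hom_g).
  rewrite wsubst_comp -[g' x in X in weq _ _ X]wsubst_letter.
  exact: eq_wsubst_weq.
- rewrite -wsubst_comp; apply: weq_trans (h'h x); apply: (wsubst_weq hom_h').
  rewrite wsubst_comp -[h x in X in weq _ _ X]wsubst_letter.
  exact: eq_wsubst_weq.
Qed.

Lemma is_aut_letter : is_aut e (@letter T).
Proof.
have hom_letter : is_hom e e (@letter T).
  by move=> x y exy; apply: (weq_swap [::] [::] false false exy).
by split=> //; exists (@letter T); split=> //; split=> x; exact: weq_refl.
Qed.

End Automorphisms.

(* [pconjs u E false] is [pconj u E], and [pconjs u E true] is its inverse. *)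
Definition pconjs (T : finType) (u : T) (E : {set T}) (s : bool) : T -> word T :=
  fun y => if y \in E then [:: (u, s); (y, false); (u, ~~ s)] else letter y.

Section SignedPartialConjugation.
Variables (T : finType) (e : rel T) (u : T) (E : {set T}).
Hypothesis esym : symmetric e.
Hypothesis E_off_star : forall a, a \in E -> a \notin star e u.
Hypothesis E_closed : forall a b, a \in E -> e a b -> b \notin E -> b \in star e u.

Lemma pconjs_boundary s a b : a \in E -> b \notin E -> e a b ->
  wcommute e (pconjs u E s a) (pconjs u E s b).
Proof.
move=> aE bE eab; rewrite /pconjs aE (negbTE bE) /letter /=.
have eub : e u b.
  move: (E_closed aE eab bE) (E_off_star aE); rewrite !inE.
  by case/orP=> [/eqP bu|//]; rewrite -bu (esym b) eab orbT.
apply: weq_trans (weq_swap [:: (u, s); (a, false)] [::] (~~ s) false eub) _.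
apply: weq_trans (weq_swap [:: (u, s)] [:: (u, ~~ s)] false false eab) _.
exact: (weq_swap [::] [:: (a, false); (u, ~~ s)] s false eub).
Qed.

Lemma pconjs_hom s : is_hom e e (pconjs u E s).
Proof.
move=> a b eab; case aE: (a \in E); case bE: (b \in E).
- rewrite /wcommute /pconjs aE bE /=.
  have := weq_cancel e [:: (u, s); (a, false)] [:: (b, false); (u, ~~ s)] u (~~ s).
  rewrite negbK /= => cancel_ab; apply: weq_trans cancel_ab _.
  have := weq_cancel e [:: (u, s); (b, false)] [:: (a, false); (u, ~~ s)] u (~~ s).
  rewrite negbK /= => cancel_ba; apply: weq_trans _ (weq_sym cancel_ba).
  exact: (weq_swap [:: (u, s)] [:: (u, ~~ s)] false false eab).
- by apply: pconjs_boundary; rewrite ?aE ?bE.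
- by apply/wcommute_sym/pconjs_boundary; rewrite ?aE ?bE // esym.
- by rewrite /wcommute /pconjs aE bE; exact: (weq_swap [::] [::] false false eab).
Qed.

Lemma pconjsK s y : weq e (wsubst (pconjs u E (~~ s)) (pconjs u E s y)) (letter y).
Proof.
have uE : u \notin E by apply/negP=> /E_off_star; rewrite !inE eqxx.
rewrite /pconjs; case yE: (y \in E); last by rewrite /wsubst /= yE cats0; exact: weq_refl.
rewrite /wsubst /= (negbTE uE) yE /= cats0.
by case: s; rewrite /letter /=; apply: weq_trans (weq_cancel e [::] _ u _) _;
  exact: (weq_cancel e [:: (y, false)] [::] u).
Qed.

Lemma pconjs_aut s : is_aut e (pconjs u E s).
Proof.
split; first exact: pconjs_hom.
exists (pconjs u E (~~ s)); split; first exact: pconjs_hom.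
by split=> x; [have := pconjsK (~~ s) x; rewrite negbK|exact: pconjsK].
Qed.

End SignedPartialConjugation.

Section VWords.
Variables (G : finType) (eG : rel G) (v : G).
Hypothesis eGsym : symmetric eG.
Implicit Types (p : word G) (a : G).

Definition vword p := all (fun q => q.1 == v) p.

Lemma vword_conj_star p a : vword p -> a \in star eG v ->
  weq eG (p ++ letter a ++ winv p) (letter a).
Proof.
move=> + a_st; elim: p => [_|[y b] p IHp /andP [/eqP /= -> /IHp]].
  exact: weq_refl.
move=> /(weq_ctx [:: (v, b)] [:: (v, ~~ b)]); rewrite winv_cons -!catA /=.
move/weq_trans; apply; rewrite /letter.
case/setU1P: a_st => [->|].
  by case: b; [exact: (weq_cancel eG [::] _ v true)|exact: (weq_cancel eG [:: _] [::] v false)].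
rewrite inE => eva; apply: weq_trans (weq_swap [::] [:: (v, ~~ b)] b false eva) _.
exact: (weq_cancel eG [:: (a, false)] [::] v b).
Qed.

Definition vpow m n : word G := nseq (m - n) (v, false) ++ nseq (n - m) (v, true).

Lemma vpow_consF m n : weq eG ((v, false) :: vpow m n) (vpow m.+1 n).
Proof.
rewrite /vpow; case: (leqP n m) => nm.
  have [-> -> ->] : [/\ m.+1 - n = (m - n).+1, n - m.+1 = 0 & n - m = 0] by split; lia.
  exact: weq_refl.
have [-> -> ->] : [/\ m - n = 0, m.+1 - n = 0 & n - m = (n - m.+1).+1] by split; lia.
exact: (weq_cancel eG [::] _ v false).
Qed.

Lemma vpow_consT m n : weq eG ((v, true) :: vpow m n) (vpow m n.+1).
Proof.
rewrite /vpow; case: (leqP m n) => mn.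
  have [-> -> ->] : [/\ n.+1 - m = (n - m).+1, m - n.+1 = 0 & m - n = 0] by split; lia.
  exact: weq_refl.
have [-> -> ->] : [/\ n - m = 0, n.+1 - m = 0 & m - n = (m - n.+1).+1] by split; lia.
exact: (weq_cancel eG [::] _ v true).
Qed.

Lemma vword_vpow p : vword p ->
  weq eG p (vpow (count (fun q => ~~ q.2) p) (count (fun q => q.2) p)).
Proof.
elim: p => [_|[y b] p IHp /andP [/eqP /= -> /IHp]]; first exact: weq_refl.
move=> /(weq_ctx [:: (v, b)] [::]); rewrite !cats0 => /weq_trans; apply.
by case: b; [exact: vpow_consT|exact: vpow_consF].
Qed.

Lemma vword_conj_pconj (B : {set G}) p a : vword p ->
  count (fun q => ~~ q.2) p = count (fun q => q.2) p + (a \in B) ->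
  weq eG (p ++ letter a ++ winv p) (pconj v B a).
Proof.
move=> p_v count_p; have p_pow := vword_vpow p_v.
apply: weq_trans (weq_cat p_pow (weq_cat (weq_refl _ _) (weq_winv eGsym p_pow))) _.
rewrite count_p /vpow /pconj addKn subnDA subnn sub0n cats0.
by case: (a \in B); exact: weq_refl.
Qed.

Lemma vword_conj_pconj_star (B : {set G}) p a : vword p -> a \in star eG v ->
  a \notin B -> weq eG (p ++ letter a ++ winv p) (pconj v B a).
Proof. by move=> p_v a_st aB; rewrite /pconj (negbTE aB); exact: vword_conj_star. Qed.

End VWords.

Definition wmap (L G : Type) (phi : L -> G) (w : word L) : word G :=
  wsubst (fun z => letter (phi z)) w.

Section ProductsOfPartialConjugations.
Variables (L G : finType) (eL : rel L) (eG : rel G) (phi : L -> G) (v : G).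
Hypothesis eLsym : symmetric eL.
Hypothesis eGsym : symmetric eG.
Implicit Types (l : seq (L * {set L} * bool)) (y : L).

Fixpoint pconjs_prod l : L -> word L :=
  if l is (u, E, s) :: l' then fun y => wsubst (pconjs_prod l') (pconjs u E s y)
  else @letter L.

Definition admissible (c : L * {set L} * bool) : Prop :=
  let: (u, E, _) := c in
  [/\ phi u = v, forall a, a \in E -> a \notin star eL u
    & forall a b, a \in E -> eL a b -> b \notin E -> b \in star eL u].

Lemma pconjs_prod_aut l : {in l, forall c, admissible c} -> is_aut eL (pconjs_prod l).
Proof.
elim: l => [_|[[u E] s] l IHl adm_l] /=; first exact: is_aut_letter.
apply: is_aut_comp => //; first by apply: IHl => c lc; apply: adm_l; rewrite inE lc orbT.
by have [_ E_off E_cl] := adm_l _ (mem_head _ _); exact: pconjs_aut.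
Qed.

Definition conjugators l y : word G := [seq (v, c.2) | c <- l & y \in (c.1.2 : {set L})].

Lemma vword_conjugators l y : vword v (conjugators l y).
Proof. by rewrite /vword /conjugators all_map; apply/allP => c _ /=. Qed.

Lemma pconjs_prod_image l : {in l, forall c, phi c.1.1 = v} -> forall y,
  weq eG (wmap phi (pconjs_prod l y))
         (conjugators l y ++ letter (phi y) ++ winv (conjugators l y)).
Proof.
elim: l => [_ y|[[u E] s] l IHl fib_l y] /=; first exact: weq_refl.
have {}IHl : forall y, weq eG (wmap phi (pconjs_prod l y))
    (conjugators l y ++ letter (phi y) ++ winv (conjugators l y)).
  by apply: IHl => c lc; apply: fib_l; rewrite inE lc orbT.
have img_u b : weq eG
    (if b then winv (wmap phi (pconjs_prod l u)) else wmap phi (pconjs_prod l u)) [:: (v, b)].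
  have phi_u : weq eG (wmap phi (pconjs_prod l u)) (letter v).
    apply: weq_trans (IHl u) _; rewrite (fib_l _ (mem_head _ _)).
    exact: vword_conj_star (vword_conjugators _ _) (setU11 _ _).
  by case: b; [move: (weq_winv eGsym phi_u)|].
rewrite /wmap wsubst_comp /conjugators /pconjs /=.
case: (y \in E) => /=; last by rewrite /letter wsubst_cons /= cats0; exact: IHl.
apply: (@weq_trans _ _ _ ([:: (v, s)] ++ (conjugators l y ++ letter (phi y) ++
    winv (conjugators l y)) ++ [:: (v, ~~ s)])); last first.
  by rewrite winv_cons -!catA; exact: weq_refl.
rewrite !wsubst_cons /= cats0.
exact: weq_cat (img_u s) (weq_cat (IHl y) (img_u (~~ s))).
Qed.

Lemma count_conjugators (P : pred bool) l y :
  count (fun q => P q.2) (conjugators l y) =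
  count (fun c : L * {set L} * bool => (y \in c.1.2) && P c.2) l.
Proof. by rewrite count_map count_filter; apply: eq_count => c; rewrite andbC. Qed.

End ProductsOfPartialConjugations.

Lemma connect_ind (T : finType) (r : rel T) (P : T -> Prop) x :
  P x -> (forall a b, connect r x a -> P a -> r a b -> P b) ->
  forall y, connect r x y -> P y.
Proof.
move=> Px step y /connectP [p]; elim/last_ind: p y => [|p b IHp] y; first by move=> _ ->.
rewrite rcons_path last_rcons => /andP [pth rab] ->.
by apply: step (IHp _ pth erefl) rab; apply/connectP; exists p.
Qed.

Lemma count_enum (T : finType) (A : {set T}) (P : pred T) :
  count P (enum A) = #|[set u in A | P u]|.
Proof. by rewrite -sum1_count big_enum_cond sum1_card; apply: eq_card => u; rewrite !inE. Qed.

Section InducedComponents.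
Variables (T : finType) (e : rel T).
Hypothesis esym : symmetric e.
Implicit Types (S : {set T}) (x y z : T).

Local Notation restr S := [rel a b | [&& e a b, a \in S & b \in S]].

Lemma in_icomp S x y : (y \in icomp e S x) = (y \in S) && connect (restr S) x y.
Proof. by rewrite inE. Qed.

Lemma mem_icomp S x : x \in S -> x \in icomp e S x.
Proof. by move=> xS; rewrite in_icomp xS connect0. Qed.

Lemma icomp_sub S x : {subset icomp e S x <= S}.
Proof. by move=> y; rewrite in_icomp => /andP []. Qed.

Lemma icomp_connect S x y : y \in icomp e S x -> connect e x y.
Proof.
rewrite in_icomp => /andP [_]; apply: connect_sub => a b /and3P [eab _ _].
exact: connect1.
Qed.

Lemma icomp_edge S x y z : y \in icomp e S x -> e y z -> z \in S -> z \in icomp e S x.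
Proof.
rewrite !in_icomp => /andP [yS cxy] eyz zS; rewrite zS.
by apply: connect_trans cxy (connect1 _); rewrite /= eyz yS zS.
Qed.

Lemma icomp_sym S x y : y \in icomp e S x -> x \in icomp e S y.
Proof.
have restr_sym : connect_sym (restr S).
  by apply: sym_connect_sym => a b /=; rewrite esym [(a \in S) && _]andbC.
rewrite !in_icomp restr_sym => /andP [yS cyx]; rewrite cyx andbT.
by apply: (connect_ind (P := fun w => w \in S)) cyx => // a b _ _ /and3P [].
Qed.

Lemma icomp_eq S x y : y \in icomp e S x -> icomp e S y = icomp e S x.
Proof.
move=> yx; move: (yx) (icomp_sym yx); rewrite !in_icomp => /andP [_ cxy] /andP [_ cyx].
by apply/setP => z; rewrite !in_icomp; case: (z \in S) => //=; apply/idP/idP;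
  [exact: connect_trans|exact: connect_trans].
Qed.

Lemma icomp_exit S x z : x \in S -> connect e x z -> z \notin icomp e S x ->
  exists c d, [/\ c \in icomp e S x, d \notin S & e c d].
Proof.
move=> xS cxz zx.
case: (boolP [exists c, exists d, [&& c \in icomp e S x, d \notin S & e c d]]).
  by case/existsP=> c /existsP [d /and3P]; exists c, d.
rewrite negb_exists => /forallP no_exit; case/negP: zx.
apply: (connect_ind (P := fun w => w \in icomp e S x)) cxz; first exact: mem_icomp.
move=> a b _ ax eab; apply: (icomp_edge ax eab); apply: contraT => bS.
by have := no_exit a; rewrite negb_exists => /forallP /(_ b); rewrite ax bS eab.
Qed.

Lemma icomp_subset S S' x : {subset icomp e S x <= S'} ->
  {subset icomp e S x <= icomp e S' x}.
Proof.
move=> sub y yx; rewrite in_icomp (sub _ yx); move: (yx); rewrite in_icomp => /andP [_ cxy].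
apply: (connect_ind (P := fun w => connect (restr S') x w)) cxy => // a b cxa cxa' rab.
have [eab aS bS] := and3P rab.
have ax : a \in icomp e S x by rewrite in_icomp aS.
apply: connect_trans cxa' (connect1 _).
by rewrite /= eab (sub _ ax) (sub _ (icomp_edge ax eab bS)).
Qed.

Lemma icomp_map (f : T -> T) S S' x y : (forall a b, e a b -> e (f a) (f b)) ->
  {in S, forall a, f a \in S'} -> y \in icomp e S x -> f y \in icomp e S' (f x).
Proof.
move=> fe fS; rewrite !in_icomp => /andP [yS cxy]; rewrite fS //=.
apply: (connect_ind (P := fun w => connect (restr S') (f x) (f w))) cxy => //.
move=> a b _ cfa /and3P [eab aS bS].
by apply: connect_trans cfa (connect1 _); rewrite /= fe // !fS.
Qed.

End InducedComponents.

Section Separation.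
Variables (T : finType) (e : rel T) (U : {pred T}).
Hypothesis esym : symmetric e.
Hypothesis stars_disjoint :
  {in U &, forall u u' t, t \in star e u -> t \in star e u' -> u = u'}.
Implicit Types (u w y z : T).

Definition comp u y := icomp e (~: star e u) y.

Definition off_stars y := {in U, forall u, y \notin star e u}.

Definition core z := [set y | [forall u in U, y \in comp u z]].

Definition frontier z := [set u in U | [forall u' in U, (u' != u) ==> (u \in comp u' z)]].

Definition cutoff z u := [set w | [&& w \notin star e u, connect e z w & w \notin comp u z]].

Lemma coreP z y : reflect {in U, forall u, y \in comp u z} (y \in core z).
Proof. by rewrite inE; apply: (iffP forall_inP). Qed.

Lemma mem_comp u y : y \notin star e u -> y \in comp u y.
Proof. by move=> yu; apply: mem_icomp; rewrite inE. Qed.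

Lemma comp_off_star u y w : w \in comp u y -> w \notin star e u.
Proof. by move/icomp_sub; rewrite inE. Qed.

Lemma core_eq z y : y \in core z -> core y = core z.
Proof.
move/coreP=> yz; apply: eq_finset => s; apply: eq_forallb => u.
by case uU: (u \in U) => //=; rewrite /comp (icomp_eq esym (yz _ uU)).
Qed.

Lemma core_off_stars z y : y \in core z -> off_stars y.
Proof. by move/coreP=> yz u uU; apply: comp_off_star (yz _ uU). Qed.

Lemma star_sub_comp u u' : u \in U -> u' \in U -> u != u' ->
  {subset star e u <= comp u' u}.
Proof.
move=> uU u'U neq t tu.
have off_u' s : s \in star e u -> s \in ~: star e u'.
  by move=> su; rewrite inE; apply: contra neq => su'; rewrite (stars_disjoint uU u'U su su').
have uu' : u \in comp u' u by apply: mem_icomp; rewrite off_u' ?setU11.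
case/setU1P: tu => [->|] //; rewrite inE => eut.
by apply: (icomp_edge uu' eut); rewrite off_u' // !inE eut orbT.
Qed.

Lemma comp_avoids_star u u' y : u \in U -> u' \in U -> u != u' ->
  y \notin comp u u' -> {in comp u y, forall w, w \notin star e u'}.
Proof.
move=> uU u'U neq yu' w wy; apply/negP => /(star_sub_comp u'U uU); rewrite eq_sym.
move=> /(_ neq) wu'; case/negP: yu'; rewrite /comp -(icomp_eq esym wu') (icomp_eq esym wy).
by apply: mem_comp; have := icomp_sym esym wy; exact: comp_off_star.
Qed.

Lemma comp_sub_comp u u' y : u \in U -> u' \in U -> u != u' ->
  y \notin comp u u' -> {subset comp u y <= comp u' y}.
Proof.
move=> uU u'U neq yu'; apply: icomp_subset => w wy.
by rewrite inE (comp_avoids_star uU u'U neq yu' wy).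
Qed.

Lemma connect_star_center u y z : y \notin star e u -> connect e y z ->
  z \notin comp u y -> connect e y u.
Proof.
move=> yu cyz zy; have yS : y \in ~: star e u by rewrite inE.
have [c [d [cy]]] := icomp_exit yS cyz zy; rewrite inE negbK => du ecd.
apply: connect_trans (connect_trans (icomp_connect cy) (connect1 ecd)) _.
case/setU1P: du => [->|] //; rewrite inE => eud; by rewrite connect1 // esym.
Qed.

Lemma comp_other_side u u' y : u \in U -> u' \in U -> u != u' ->
  y \notin star e u' -> connect e y u' -> y \notin comp u' u -> y \in comp u u'.
Proof.
move=> uU u'U neq yu' cyu' yu; have neq' : u' != u by rewrite eq_sym.
have yS : y \in ~: star e u' by rewrite inE.
have u'y : u' \notin comp u' y by apply/negP => /comp_off_star; rewrite setU11.
have [c [d [cy]]] := icomp_exit yS cyu' u'y; rewrite inE negbK => du ecd.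
have cu : c \in comp u y := comp_sub_comp u'U uU neq' yu cy.
have du' : d \in comp u u' := star_sub_comp u'U uU neq' du.
have cu' : c \in comp u u'.
  by apply: (icomp_edge du'); rewrite 1?esym // inE (comp_avoids_star u'U uU neq' yu cy).
rewrite /comp -(icomp_eq esym cu') (icomp_eq esym cu).
by apply: mem_comp; apply: comp_off_star (icomp_sym esym cu).
Qed.

Lemma mem_core z : off_stars z -> z \in core z.
Proof. by move=> zoff; apply/coreP => u uU; apply: mem_comp; exact: zoff. Qed.

Lemma in_cutoff z u w :
  (w \in cutoff z u) = [&& w \notin star e u, connect e z w & w \notin comp u z].
Proof. by rewrite /cutoff in_set. Qed.

Lemma cutoff_closed z u a b : a \in cutoff z u -> e a b -> b \notin cutoff z u ->
  b \in star e u.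
Proof.
rewrite !in_cutoff => /and3P [au cza az] eab; apply: contraR => bu.
rewrite bu (connect_trans cza (connect1 eab)) /=; apply: contra az => bz.
by apply: (icomp_edge bz); rewrite 1?esym // in_setC.
Qed.

Lemma frontier_subU z : {subset frontier z <= U}.
Proof. by move=> u; rewrite inE => /andP []. Qed.

Lemma frontier_comp z u u' : u \in frontier z -> u' \in U -> u' != u -> u \in comp u' z.
Proof. by rewrite inE => /andP [_ /forall_inP front] /front /implyP. Qed.

Lemma frontier_uniq z y u1 u2 : off_stars y -> connect e z y ->
  u1 \in frontier z -> u2 \in frontier z ->
  y \notin comp u1 z -> y \notin comp u2 z -> u1 = u2.
Proof.
move=> yoff czy f1 f2 y1 y2; apply/eqP/contraT => neq.
have [u1U u2U] := (frontier_subU f1, frontier_subU f2).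
have u21 := frontier_comp f2 u1U neq; rewrite eq_sym in neq.
have u12 := frontier_comp f1 u2U neq.
have cyu1 : connect e y u1.
  by rewrite (sym_connect_sym esym) in czy; exact: connect_trans czy (icomp_connect u12).
have : y \in comp u2 u1.
  apply: comp_other_side u2U u1U neq (yoff _ u1U) cyu1 _.
  by rewrite /comp (icomp_eq esym u21).
by rewrite /comp (icomp_eq esym u12) (negbTE y2).
Qed.

Lemma frontier_exists z y : off_stars z -> off_stars y -> connect e z y ->
  y \notin core z -> exists2 u, u \in frontier z & y \notin comp u z.
Proof.
move=> zoff yoff czy yz.
have /exists_inP [u0 u0U yu0] : [exists u0 in U, y \notin comp u0 z].
  by rewrite -negb_forall_in; apply: contra yz => /forall_inP /coreP.
pose P u := (u \in U) && (y \notin comp u z).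
have [u /andP [uU yu] umax] :=
  @arg_maxnP _ u0 P (fun u => #|comp u y|) (introT andP (conj u0U yu0)).
exists u => //; rewrite inE uU; apply/forall_inP => u' u'U; apply/implyP => neq'.
apply: contraT => uu'; have neq : u != u' by rewrite eq_sym.
have zuy : z \notin comp u y by apply: contra yu => /(icomp_sym esym).
have cyu : connect e y u.
  by apply: connect_star_center (yoff _ uU) _ zuy; rewrite (sym_connect_sym esym).
have uu'u : u \in comp u' u := star_sub_comp uU u'U neq (setU11 _ _).
case: (boolP (y \in comp u u')) => [yuu'|yuu'].
  case/negP: uu'; apply: (icomp_sym esym); apply: comp_other_side u'U uU neq' (zoff _ uU) _ _.
    exact: connect_trans czy cyu.
  by rewrite /comp -(icomp_eq esym yuu').
have yu'u : y \in comp u' u := comp_other_side u'U uU neq' (yoff _ uU) cyu yuu'.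
have yu'z : y \notin comp u' z.
  by apply: contra uu' => /(icomp_eq esym); rewrite /comp => <-; rewrite (icomp_eq esym yu'u).
have := umax u'; rewrite /P u'U yu'z => /(_ isT); apply: contraTT => _; rewrite -ltnNge.
apply/proper_card/properP; split; first exact/subsetP/(comp_sub_comp uU u'U neq yuu').
exists u; first exact: (icomp_sym esym yu'u).
by apply/negP => /comp_off_star; rewrite setU11.
Qed.

Lemma connect_core_cutoff z y u0 : u0 \in U -> off_stars z -> off_stars y ->
  (connect e z y : nat) = (y \in core z) + #|[set u in frontier z | y \in cutoff z u]|.
Proof.
move=> u0U zoff yoff.
have -> : [set u in frontier z | y \in cutoff z u] =
          [set u in frontier z | connect e z y && (y \notin comp u z)].
  apply: eq_finset => u; apply: andb_id2l => /frontier_subU uU.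
  by rewrite in_cutoff (yoff _ uU).
have [czy|nczy] := boolP (connect e z y); last first.
  have -> : y \in core z = false.
    by apply: contraNF nczy => /coreP /(_ _ u0U) /icomp_connect.
  rewrite (_ : [set u in _ | _] = set0) ?cards0 //.
  by apply/setP => u; rewrite in_set in_set0 andFb andbF.
have [yz|yz] := boolP (y \in core z).
  rewrite (_ : [set u in _ | _] = set0) ?cards0 //; apply/setP => u.
  by rewrite in_set in_set0; apply/andP => -[/frontier_subU uU]; rewrite (coreP _ _ yz _ uU) andbF.
have [u uf yu] := frontier_exists zoff yoff czy yz.
rewrite (_ : [set u in _ | _] = [set u]) ?cards1 //; apply/setP => u'.
rewrite in_set in_set1 /=; apply/idP/eqP => [/andP [u'f yu']|->]; last by rewrite uf.
exact: frontier_uniq yoff czy u'f uf yu' yu.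
Qed.

End Separation.

Section RegularCovering.
Variables (L G : finType) (eL : rel L) (eG : rel G) (phi : L -> G) (v : G) (x u0 : L).
Hypothesis eLsym : symmetric eL.
Hypothesis eGsym : symmetric eG.
Hypothesis eGirr : irreflexive eG.
Hypothesis phi_edge : forall u w, eL u w -> eG (phi u) (phi w).
Hypothesis phi_locinj : forall u, {in [pred w | eL u w] &, injective phi}.
Hypothesis phi_lift : forall u y, eG (phi u) y -> exists w, eL u w /\ phi w = y.
Hypothesis phi_regular : forall u u', phi u = phi u' ->
  exists mu : L -> L, [/\ bijective mu, forall a b, eL (mu a) (mu b) = eL a b,
                         forall a, phi (mu a) = phi a & mu u = u'].
Hypothesis phi_u0 : phi u0 = v.

Local Notation fiber := [pred u | phi u == v].
Local Notation comp := (comp eL).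
Local Notation core := (core eL fiber).
Local Notation off_stars := (off_stars eL fiber).

Lemma fiber_stars_disjoint :
  {in fiber &, forall u u' t, t \in star eL u -> t \in star eL u' -> u = u'}.
Proof.
move=> u u' /eqP pu /eqP pu' t tu tu'.
case/setU1P: tu => [tu|]; case/setU1P: tu' => [tu'|]; rewrite ?inE.
- by rewrite -tu tu'.
- by move=> /phi_edge; rewrite tu pu pu' eGirr.
- by move=> /phi_edge; rewrite tu' pu pu' eGirr.
by move=> eut eu't; apply: (phi_locinj (u := t)); rewrite ?inE 1?eLsym ?pu ?pu'.
Qed.

Lemma off_starsE y : off_stars y <-> phi y \notin star eG v.
Proof.
split=> [yoff|yv u /eqP pu].
  apply/negP => /setU1P [pyv|]; first by have := yoff y; rewrite inE pyv eqxx setU11 => /(_ isT).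
  rewrite inE eGsym => /phi_lift [w [eyw /eqP pw]].
  by have := yoff w pw; rewrite !inE eLsym eyw orbT.
apply: contra yv => /setU1P [->|]; first by rewrite pu setU11.
by rewrite !inE => /phi_edge; rewrite pu => ->; rewrite orbT.
Qed.

Lemma comp_deck (mu : L -> L) u y w : injective mu ->
  (forall a b, eL (mu a) (mu b) = eL a b) -> w \in comp u y -> mu w \in comp (mu u) (mu y).
Proof.
move=> mu_inj mu_e; apply: icomp_map => [a b|a]; first by rewrite mu_e.
by rewrite !inE (inj_eq mu_inj) mu_e.
Qed.

Lemma core_deck (mu : L -> L) z y : bijective mu ->
  (forall a b, eL (mu a) (mu b) = eL a b) -> (forall a, phi (mu a) = phi a) ->
  y \in core z -> mu y \in core (mu z).
Proof.
move=> [nu muK nuK] mu_e mu_phi /coreP yz; apply/coreP => u /eqP pu.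
rewrite -(nuK u); apply: comp_deck (can_inj muK) mu_e (yz _ _).
by rewrite inE -(mu_phi (nu u)) nuK pu.
Qed.

Lemma barBE : barB eL phi v x = phi @: core x.
Proof. by []. Qed.

Definition lifted_barB := phi @^-1: barB eL phi v x.

Lemma mem_lifted_barB y : (y \in lifted_barB) = (phi y \in barB eL phi v x).
Proof. by rewrite in_set. Qed.

Lemma barB_off_star a : a \in barB eL phi v x -> a \notin star eG v.
Proof. by rewrite barBE => /imsetP [d /core_off_stars /off_starsE dv ->]. Qed.

Lemma lifted_barB_off_stars y : y \in lifted_barB -> off_stars y.
Proof. by rewrite inE => /barB_off_star /off_starsE. Qed.

Lemma lifted_barB_closed y s : y \in lifted_barB -> s \in core y -> s \in lifted_barB.
Proof.
rewrite !mem_lifted_barB barBE => /imsetP [d dx pyd] sy.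
have [mu [mu_bij mu_e mu_phi mu_y]] := phi_regular pyd.
apply/imsetP; exists (mu s); last by rewrite mu_phi.
by rewrite -(core_eq eLsym dx) -mu_y; exact: core_deck mu_bij mu_e mu_phi sy.
Qed.

Definition classes := [set core y | y in lifted_barB].

Definition rep (Q : {set L}) := odflt x [pick w in Q].

Lemma rep_class Q : Q \in classes -> core (rep Q) = Q /\ off_stars (rep Q).
Proof.
case/imsetP=> y yW ->; rewrite /rep; case: pickP => [w wy|no_rep] /=.
  by split; [exact: (core_eq eLsym wy)|exact: (core_off_stars wy)].
by have := no_rep y; rewrite mem_core //; exact: (lifted_barB_off_stars yW).
Qed.

Lemma sum_classes y : off_stars y -> \sum_(Q in classes) (y \in Q) = (y \in lifted_barB).
Proof.
move=> yoff; have [yW|yW] := boolP (y \in lifted_barB).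
  rewrite (bigD1 (core y)) ?imset_f //= mem_core // big1 // => Q /andP [].
  case/imsetP=> w wW -> neq; apply/eqP; rewrite eqb0; apply: contra neq => yw.
  by rewrite (core_eq eLsym yw).
rewrite big1 // => Q /imsetP [w wW ->]; apply/eqP; rewrite eqb0; apply: contra yW.
exact: lifted_barB_closed.
Qed.

Definition class_items z : seq (L * {set L} * bool) :=
  (u0, [set w | connect eL z w] :\: star eL u0, false) ::
  [seq (u, cutoff eL z u, true) | u <- enum (frontier eL fiber z)].

Definition lift_items := flatten [seq class_items (rep Q) | Q <- enum classes].

Lemma lift_items_admissible : {in lift_items, forall c, admissible eL phi v c}.
Proof.
move=> c /flattenP [_ /mapP [Q _ ->]]; rewrite inE => /predU1P [->|].
  split=> // [a|a b]; first by rewrite in_setD => /andP [].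
  rewrite !in_setD !inE => /andP [_ za] eab.
  by rewrite (connect_trans za (connect1 eab)) andbT negbK.
case/mapP=> u; rewrite mem_enum => /[dup] /frontier_subU /eqP pu uf ->.
split=> // [a|a b]; first by rewrite in_cutoff => /andP [].
exact: cutoff_closed.
Qed.

Lemma count_class_items_neg z y : y \notin star eL u0 ->
  count (fun c : L * {set L} * bool => (y \in c.1.2) && ~~ c.2) (class_items z) =
  connect eL z y.
Proof.
move=> yu0; rewrite /= count_map (eq_count (a2 := pred0)) ?count_pred0 => [|u].
  by rewrite in_setD yu0 inE addn0; case: connect.
by rewrite /= andbF.
Qed.

Lemma count_class_items_pos z y :
  count (fun c : L * {set L} * bool => (y \in c.1.2) && c.2) (class_items z) =
  #|[set u in frontier eL fiber z | y \in cutoff eL z u]|.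
Proof.
rewrite /= andbF add0n count_map -count_enum; apply: eq_count => u /=; exact: andbT.
Qed.

Lemma count_lift_items y : off_stars y ->
  count (fun c : L * {set L} * bool => (y \in c.1.2) && ~~ c.2) lift_items =
  count (fun c : L * {set L} * bool => (y \in c.1.2) && c.2) lift_items + (y \in lifted_barB).
Proof.
move=> yoff; rewrite !count_flatten !sumnE !big_map !big_enum.
rewrite -sum_classes // -big_split; apply: eq_bigr => Q classQ.
have [coreQ rep_off] := rep_class classQ; have u0F : u0 \in fiber by rewrite inE phi_u0.
rewrite count_class_items_neg ?yoff // count_class_items_pos.
by rewrite (connect_core_cutoff eLsym fiber_stars_disjoint u0F rep_off yoff) coreQ addnC.
Qed.

Lemma pconj_barB_liftable : liftable eL eG phi (pconj v (barB eL phi v x)).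
Proof.
exists (pconjs_prod lift_items); split; first exact: pconjs_prod_aut lift_items_admissible.
have fiber_items : {in lift_items, forall c, phi c.1.1 = v}.
  by move=> [[u E] s] /lift_items_admissible [].
move=> y; apply: weq_trans _ (weq_sym (pconjs_prod_image eGsym fiber_items y)).
apply: weq_sym; have [yv|yv] := boolP (phi y \in star eG v).
  apply: (vword_conj_pconj_star (vword_conjugators _ _ _) yv).
  by apply: contraL yv; exact: barB_off_star.
apply: (vword_conj_pconj eGsym (vword_conjugators _ _ _)).
rewrite (count_conjugators _ negb) (count_conjugators _ id) count_lift_items ?mem_lifted_barB //.
exact/off_starsE.
Qed.

End RegularCovering.

Theorem proposition3p8 (L G : finType) (eL : rel L) (eG : rel G) (phi : L -> G) :
  simple_graph eL -> simple_graph eG ->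
  is_regular_covering eL eG phi ->
  forall (v b : G), b \notin star eG v ->
  let B := icomp eG (~: star eG v) b in
  forall x : L, phi x \in B ->
  liftable eL eG phi (pconj v (barB eL phi v x)).
Proof.
move=> [eLsym _] [eGsym eGirr] [[phi_onto phi_edge phi_locinj phi_lift] phi_regular].
(* The lift exists for every x; the hypotheses on b and x only make [barB] the paper's \bar B. *)
move=> v b _ B x _; have [u0 phi_u0] := phi_onto v.
exact: pconj_barB_liftable eLsym eGsym eGirr phi_edge phi_locinj phi_lift phi_regular
  phi_u0.
Qed.
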